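(* Let $\mathbf{F}=F(\mathcal{R}[t,t^{-1}])$, let $k>1$ and $d=2^{k-2}$. If $g\in\mathbf{F}^{(k)}$, the $k$-th derived subgroup of $\mathbf{F}$, then $g=I+\sum_{i\ge d}(t-1)^iA_i$ with $A_i\in M_2(\mathcal{R})$, and all entries of $A_i$ lie in $\Sigma^{2d}$ for every $i\ge d$.
   Context: $\mathcal{R}=\mathbb{Z}[x,x^{-1},y,y^{-1}]$; $\Sigma$ is the augmentation ideal of $\mathcal{R}$ (kernel of $x,y\mapsto1$ to $\mathbb{Z}$). $F(\mathcal{R}[t,t^{-1}])$ is the subgroup of $GL_2(\mathcal{R}[t,t^{-1}])$ generated by $M_1=\begin{pmatrix}1&1-y\\0&x\end{pmatrix}$ and $M_2T=\begin{pmatrix}yt&0\\1-xt&1\end{pmatrix}$. Via $t=1+s$, $t^{-1}=\sum_{i\ge0}(-s)^i$, $\mathcal{R}[t,t^{-1}]$ embeds in $\mathcal{R}[[s]]$, giving each matrix over $\mathcal{R}[t,t^{-1}]$ a unique expansion $\sum_{i\ge0}(t-1)^iA_i$ with $A_i$ matrices over $\mathcal{R}$. Derived series: $\mathbf{F}^{(1)}=\mathbf{F}'$, $\mathbf{F}^{(k+1)}=[\mathbf{F}^{(k)},\mathbf{F}^{(k)}]$. *)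

From HB Require Import structures.
From mathcomp Require Import all_boot all_order all_algebra.
From mathcomp Require Import mpoly.
Set Implicit Arguments. Unset Strict Implicit. Unset Printing Implicit Defensive.
Import Order.TTheory GRing.Theory Num.Theory.
Local Open Scope ring_scope.

Definition Zxy := {mpoly int[2]}.
Definition Kxy : fieldType := {fraction Zxy}.
Definition xR : Kxy := tofrac ('X_0 : Zxy).
Definition yR : Kxy := tofrac ('X_1 : Zxy).

(* a lies in R = Z[x^{±1}, y^{±1}] *)
Definition inR (a : Kxy) : Prop :=
  exists (p : Zxy) (n : nat), a = tofrac p / (xR * yR) ^+ n.

(* a lies in the augmentation ideal Sigma (kernel of x,y |-> 1, R -> Z) *)
Definition inSigma (a : Kxy) : Prop :=
  exists (p : Zxy) (n : nat),
    a = tofrac p / (xR * yR) ^+ n /\ p.@[fun _ => (1 : int)] = 0.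

Fixpoint inSigmaPow (m : nat) (a : Kxy) : Prop :=
  match m with
  | 0 => inR a
  | m'.+1 => exists s : seq (Kxy * Kxy),
      (forall bc, bc \in s -> inSigma bc.1 /\ inSigmaPow m' bc.2) /\
      a = \sum_(bc <- s) bc.1 * bc.2
  end.

Definition Fld : fieldType := {fraction {poly Kxy}}.
Definition tF : Fld := tofrac ('X : {poly Kxy}).
Definition cF (a : Kxy) : Fld := tofrac (a%:P).

Definition ps := nat -> Kxy.
Definition ps_mul (f g : ps) : ps := fun n => \sum_(i < n.+1) f i * g (n - i)%N.
Definition ps_one : ps := fun n => if n == 0%N then 1 else 0.
Definition ps_pow (f : ps) (n : nat) : ps := iter n (ps_mul f) ps_one.
Definition ps_of_poly (p : {poly Kxy}) : ps := fun n => p`_n.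
(* image of t^{-1} = sum_i (-s)^i *)
Definition ps_tinv : ps := fun n => (-1) ^+ n.

(* The embedding R[t,t^-1] -> R[[s]], t = 1+s, t^-1 = sum_i (-s)^i:
   a is the s-expansion of f, where f = p(t) t^{-n} with p in R[t]. *)
Definition s_expansion (f : Fld) (a : ps) : Prop :=
  exists (p : {poly Kxy}) (n : nat),
    (forall i, inR p`_i) /\ f = tofrac p / tF ^+ n /\
    a = ps_mul (ps_of_poly (p \Po ('X + 1))) (ps_pow ps_tinv n).

Definition Mat := 'M[Fld]_2.

Definition M1 : Mat := \matrix_(i < 2, j < 2)
  (if i == 0 :> nat then (if j == 0 :> nat then 1 else cF (1 - yR))
   else (if j == 0 :> nat then 0 else cF xR)).
Definition M2T : Mat := \matrix_(i < 2, j < 2)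
  (if i == 0 :> nat then (if j == 0 :> nat then cF yR * tF else 0)
   else (if j == 0 :> nat then 1 - cF xR * tF else 1)).

Inductive gen (S : Mat -> Prop) : Mat -> Prop :=
| gen1 : gen S 1
| genM a b : S a -> gen S b -> gen S (a * b)
| genV a b : S a -> gen S b -> gen S (a^-1 * b).

Definition Fgroup : Mat -> Prop := gen (fun a => a = M1 \/ a = M2T).

Definition commutator_subgroup (H : Mat -> Prop) : Mat -> Prop :=
  gen (fun c => exists a b, H a /\ H b /\ c = a^-1 * b^-1 * a * b).

Fixpoint derived (k : nat) : Mat -> Prop :=
  match k with
  | 0 => Fgroup
  | k'.+1 => commutator_subgroup (derived k')
  end.

From HB Require Import structures.
From mathcomp Require Import all_boot all_order all_algebra.
From mathcomp Require Import mpoly.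
From mathcomp Require Import ring.
From Stdlib Require Import FunctionalExtensionality.
Set Implicit Arguments. Unset Strict Implicit. Unset Printing Implicit Defensive.
Import GRing.Theory.
Local Open Scope ring_scope.

(* Write [s = t - 1] and [v = (1 - y, x - 1)^T], whose entries lie in [Sigma].
   Both generators of [F] and their inverses are congruent modulo [s Sigma] to a
   matrix [1 + v w^T + s be P], with [P = [[1, 0], [-1, 0]]] and [1 + w^T v] a unit
   of [R], and this shape is stable under products.  Since
   [v w^T v w'^T = (w^T v) v w'^T], the commutator of two such matrices is
   congruent to [1 + l v v'^T] modulo [s Sigma], where [v' = (v2, -v1)].  Multiples
   of the single matrix [v v'^T] commute and its entries lie in [Sigma^2], so
   [F^(2)] is congruent to [1] modulo [s Sigma^2].  From then on
   [[g, h] - 1 = (h g)^-1 ((g - 1)(h - 1) - (h - 1)(g - 1))] doubles both exponents: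
   [F^(k)] is congruent to [1] modulo [s^(2^(k-2)) Sigma^(2^(k-1))], and expanding
   [t^-n = sum (-s)^i] yields the coefficients [A_i]. *)

(** * Two-by-two matrices *)

Definition o0 : 'I_2 := @Ordinal 2 0 isT.
Definition o1 : 'I_2 := @Ordinal 2 1 isT.

Lemma ord2P (P : 'I_2 -> Prop) : P o0 -> P o1 -> forall i, P i.
Proof.
by move=> P0 P1 [[|[|//]] lt_i2]; rewrite (bool_irrelevance lt_i2 isT).
Qed.

Section TwoByTwo.
Variable R : comRingType.
Implicit Types (M N : 'M[R]_2).

Lemma mulmx2E M N i j : (M * N) i j = M i o0 * N o0 j + M i o1 * N o1 j.
Proof.
rewrite -mulmxE mxE big_ord_recl big_ord1.
by congr (M i _ * N _ j + M i _ * N _ j); apply: val_inj.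
Qed.

Lemma idmx2E i j : (1 : 'M[R]_2) i j = (i == j)%:R.
Proof. by rewrite -idmxE mxE. Qed.

Lemma mx2_ext M N : M o0 o0 = N o0 o0 -> M o0 o1 = N o0 o1 ->
  M o1 o0 = N o1 o0 -> M o1 o1 = N o1 o1 -> M = N.
Proof. by move=> ? ? ? ?; apply/matrixP; apply: ord2P; apply: ord2P. Qed.

Definition mx2 (a b c d : R) : 'M[R]_2 :=
  \matrix_(i, j) if i == o0 then (if j == o0 then a else b)
                 else (if j == o0 then c else d).
End TwoByTwo.

Ltac mx2_ring := apply: mx2_ext; rewrite ?(mulmx2E, idmx2E, mxE) /=; ring.

Section RankOneIdentities.
Variables (R : comRingType) (v1 v2 : R).
Implicit Types (a b c g h : 'M[R]_2).

(* With [v = (v1, v2)^T]: [vmx w1 w2 = v w^T], [nmx = v v'^T] for [v' = (v2, -v1)],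
   [vdot w1 w2 = w^T v], and [gpart s w1 w2 be = v w^T + s be P] with [P = pmx]. *)
Definition vmx (w1 w2 : R) := mx2 (v1 * w1) (v1 * w2) (v2 * w1) (v2 * w2).
Definition nmx := vmx v2 (- v1).
Definition pmx : 'M[R]_2 := mx2 1 0 (-1) 0.
Definition vdot (w1 w2 : R) := w1 * v1 + w2 * v2.
Definition gpart (s w1 w2 be : R) := vmx w1 w2 + (s * be) *: pmx.

Lemma vdot_compose w1 w2 w1' w2' :
  1 + vdot (w1 + w1' + vdot w1 w2 * w1') (w2 + w2' + vdot w1 w2 * w2')
  = (1 + vdot w1 w2) * (1 + vdot w1' w2').
Proof. rewrite /vdot; ring. Qed.

(* Each identity splits a product or commutator into its expected main part plus
   terms containing a residual ([g - 1 - gpart ...] or [g - 1 - l *: nmx]), a factor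
   [s], or a product of two entries of [v]. *)
Lemma gpart_mul_residual g h s w1 w2 w1' w2' be be' :
  g * h - 1 - gpart s (w1 + w1' + vdot w1 w2 * w1') (w2 + w2' + vdot w1 w2 * w2')
                      (be + be' + s * be * be')
  = (s * be') *: (vmx w1 w2 * pmx) + (s * be) *: (pmx * vmx w1' w2')
    + (g - 1 - gpart s w1 w2 be) + (h - 1 - gpart s w1' w2' be')
    + gpart s w1 w2 be * (h - 1 - gpart s w1' w2' be')
    + (g - 1 - gpart s w1 w2 be) * (h - 1).
Proof. rewrite /gpart /vmx /pmx /vdot; mx2_ring. Qed.

Lemma gpart_comm_residual a b s w1 w2 w1' w2' be be' :
  (a - 1) * (b - 1) - (b - 1) * (a - 1) - (w2 * w1' - w1 * w2') *: nmx
  = (s * be') *: (vmx w1 w2 * pmx - pmx * vmx w1 w2)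
    + (s * be) *: (pmx * vmx w1' w2' - vmx w1' w2' * pmx)
    + gpart s w1 w2 be * (b - 1 - gpart s w1' w2' be')
    + (a - 1 - gpart s w1 w2 be) * (b - 1)
    - gpart s w1' w2' be' * (a - 1 - gpart s w1 w2 be)
    - (b - 1 - gpart s w1' w2' be') * (a - 1).
Proof. rewrite /gpart /nmx /vmx /pmx; mx2_ring. Qed.

Lemma gpart_mul_nmx_residual c s w1 w2 be :
  c * nmx - (1 + vdot w1 w2) *: nmx
  = (s * be) *: (pmx * nmx) + (c - 1 - gpart s w1 w2 be) * nmx.
Proof. rewrite /gpart /nmx /vmx /pmx /vdot; mx2_ring. Qed.

Lemma nmx_mul_residual g h l m :
  g * h - 1 - (l + m) *: nmx
  = (g - 1 - l *: nmx) + (h - 1 - m *: nmx) + l *: (nmx * (h - 1 - m *: nmx))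
    + (g - 1 - l *: nmx) * (h - 1).
Proof. rewrite /nmx /vmx; mx2_ring. Qed.

Lemma nmx_comm_residual g h l m :
  (g - 1) * (h - 1) - (h - 1) * (g - 1)
  = l *: (nmx * (h - 1 - m *: nmx) - (h - 1 - m *: nmx) * nmx)
    + m *: ((g - 1 - l *: nmx) * nmx - nmx * (g - 1 - l *: nmx))
    + ((g - 1 - l *: nmx) * (h - 1 - m *: nmx) - (h - 1 - m *: nmx) * (g - 1 - l *: nmx)).
Proof. rewrite /nmx /vmx; mx2_ring. Qed.
End RankOneIdentities.

(** * The ring [R] and the powers of [Sigma] *)

Lemma add_div_pow (F : fieldType) (a b c : F) n m : c != 0 ->
  a / c ^+ n + b / c ^+ m = (a * c ^+ m + b * c ^+ n) / c ^+ (n + m).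
Proof. by move=> c0; rewrite exprD; field; rewrite !expf_neq0. Qed.

Lemma mul_div_pow (F : fieldType) (a b c : F) n m : c != 0 ->
  (a / c ^+ n) * (b / c ^+ m) = (a * b) / c ^+ (n + m).
Proof. by move=> c0; rewrite exprD; field; rewrite !expf_neq0. Qed.

Lemma xyR_tofrac : xR * yR = tofrac ('X_0 * 'X_1 : Zxy).
Proof. by rewrite tofracM. Qed.

Lemma xyR_neq0 : xR * yR != 0.
Proof.
rewrite xyR_tofrac tofrac_eq0; apply/eqP => /(congr1 (meval (fun=> 1%R))).
by rewrite mevalM !mevalXU meval0 mulr1.
Qed.

Lemma xR_neq0 : xR != 0.
Proof. have := xyR_neq0; rewrite mulf_eq0 negb_or => /andP[x0 _]; exact: x0. Qed.

Lemma yR_neq0 : yR != 0.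
Proof. have := xyR_neq0; rewrite mulf_eq0 negb_or => /andP[_ y0]; exact: y0. Qed.

Lemma add_div_xy (p q : Zxy) n m :
  tofrac p / (xR * yR) ^+ n + tofrac q / (xR * yR) ^+ m
  = tofrac (p * ('X_0 * 'X_1) ^+ m + q * ('X_0 * 'X_1) ^+ n) / (xR * yR) ^+ (n + m).
Proof. by rewrite add_div_pow ?xyR_neq0 // tofracD !tofracM !tofracXn -xyR_tofrac. Qed.

Lemma mul_div_xy (p q : Zxy) n m :
  (tofrac p / (xR * yR) ^+ n) * (tofrac q / (xR * yR) ^+ m)
  = tofrac (p * q) / (xR * yR) ^+ (n + m).
Proof. by rewrite mul_div_pow ?xyR_neq0 // tofracM. Qed.

Lemma inRD a b : inR a -> inR b -> inR (a + b).
Proof. by move=> [p [n ->]] [q [m ->]]; rewrite add_div_xy; do 2!eexists. Qed.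

Lemma inRM a b : inR a -> inR b -> inR (a * b).
Proof. by move=> [p [n ->]] [q [m ->]]; rewrite mul_div_xy; do 2!eexists. Qed.

Lemma inRN a : inR a -> inR (- a).
Proof. by move=> [p [n ->]]; exists (- p), n; rewrite tofracN mulNr. Qed.

Lemma inRB a b : inR a -> inR b -> inR (a - b).
Proof. by move=> ha hb; apply/inRD/inRN. Qed.

Lemma inR_tofrac p : inR (tofrac p).
Proof. by exists p, 0%N; rewrite divr1. Qed.

Lemma inR0 : inR 0. Proof. by rewrite -tofrac0; apply: inR_tofrac. Qed.
Lemma inR1 : inR 1. Proof. by rewrite -tofrac1; apply: inR_tofrac. Qed.
Lemma inR_x : inR xR. Proof. exact: inR_tofrac. Qed.
Lemma inR_y : inR yR. Proof. exact: inR_tofrac. Qed.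

Lemma inR_natr n : inR n%:R.
Proof. by rewrite -tofracMn; apply: inR_tofrac. Qed.

Lemma inRX a n : inR a -> inR (a ^+ n).
Proof. by move=> ha; elim: n => [|n IH]; [apply: inR1 | rewrite exprS; apply: inRM]. Qed.

Lemma inR_xV : inR xR^-1.
Proof.
by exists 'X_1, 1%N; rewrite -[RHS]/(yR / (xR * yR)) invfM mulrCA divff ?yR_neq0 ?mulr1.
Qed.

Lemma inR_yV : inR yR^-1.
Proof.
by exists 'X_0, 1%N; rewrite -[RHS]/(xR / (xR * yR)) invfM mulrA divff ?xR_neq0 ?mul1r.
Qed.

Lemma inSigma_R a : inSigma a -> inR a.
Proof. by move=> [p [n [-> _]]]; exists p, n. Qed.

Lemma inSigma_x1 : inSigma (xR - 1).
Proof.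
exists ('X_0 - 1), 0%N; split; first by rewrite divr1 tofracB tofrac1.
by rewrite mevalB mevalXU meval1 subrr.
Qed.

Lemma inSigma_1y : inSigma (1 - yR).
Proof.
exists (1 - 'X_1), 0%N; split; first by rewrite divr1 tofracB tofrac1.
by rewrite mevalB mevalXU meval1 subrr.
Qed.

Inductive sigpow : nat -> Kxy -> Prop :=
| sigpow_R a : inR a -> sigpow 0 a
| sigpow0 b : sigpow b 0
| sigpowD b a c : sigpow b a -> sigpow b c -> sigpow b (a + c)
| sigpowSM b a c : inSigma a -> sigpow b c -> sigpow b.+1 (a * c).

Lemma sigpow_inR b a : sigpow b a -> inR a.
Proof.
elim=> {b a} [a //|b|b a c _ ? _ ?|b a c /inSigma_R ? _ ?];
  [exact: inR0 | exact: inRD | exact: inRM].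
Qed.

Lemma sigpowMl b r a : inR r -> sigpow b a -> sigpow b (r * a).
Proof.
move=> hr; elim=> {b a} [a ha|b|b a c _ IHa _ IHc|b a c ha _ IHc].
- by apply/sigpow_R/inRM.
- by rewrite mulr0; apply: sigpow0.
- by rewrite mulrDr; apply: sigpowD.
- by rewrite mulrCA; apply: sigpowSM.
Qed.

Lemma sigpowM b c a e : sigpow b a -> sigpow c e -> sigpow (b + c) (a * e).
Proof.
move=> + he; elim=> {b a} [a ha|b|b a c' _ IHa _ IHc|b a c' ha _ IHc].
- exact: sigpowMl.
- by rewrite mul0r; apply: sigpow0.
- by rewrite mulrDl; apply: sigpowD.
- by rewrite -mulrA addSn; apply: sigpowSM.
Qed.

Lemma sigpow_pred b a : sigpow b.+1 a -> sigpow b a.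
Proof.
move Eb: b.+1 => b' h; elim: h b Eb => {b' a} [//|b'|b' a c _ IHa _ IHc|b' a c ha hc _] b Eb.
- exact: sigpow0.
- by apply: sigpowD; [apply: IHa | apply: IHc].
- by case: Eb => ->; apply: sigpowMl => //; apply: inSigma_R.
Qed.

Lemma sigpow_le b b' a : (b' <= b)%N -> sigpow b a -> sigpow b' a.
Proof.
move=> /subnK <-; elim: (b - b')%N => [//|n IH] h.
by apply/IH/sigpow_pred.
Qed.

Lemma sigpowN b a : sigpow b a -> sigpow b (- a).
Proof. by rewrite -mulN1r; apply/sigpowMl/inRN/inR1. Qed.

Lemma sigpow_Sigma a : inSigma a -> sigpow 1 a.
Proof. by move=> ha; rewrite -[a]mulr1; apply/sigpowSM/sigpow_R/inR1. Qed.

Lemma sigpowP b a : sigpow b a -> inSigmaPow b a.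
Proof.
elim=> {b a} [a //|[|b]|[|b] a c _ IHa _ IHc|b a c ha _ IHc] /=.
- exact: inR0.
- by exists [::]; split=> [bc|]; rewrite ?big_nil.
- exact: inRD.
- case: IHa => [s1 [s1P ->]]; case: IHc => [s2 [s2P ->]].
  exists (s1 ++ s2); split; last by rewrite big_cat.
  by move=> bc; rewrite mem_cat => /orP[/s1P|/s2P].
- exists [:: (a, c)]; split; last by rewrite big_seq1.
  by move=> bc; rewrite inE => /eqP ->.
Qed.

(** * The filtration [(t - 1)^a Sigma^b] of [R[t, t^-1]] *)

Definition polyS b (p : {poly Kxy}) := forall i, sigpow b p`_i.

Lemma polyS0 b : polyS b 0.
Proof. by move=> i; rewrite coef0; apply: sigpow0. Qed.

Lemma polySD b p q : polyS b p -> polyS b q -> polyS b (p + q).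
Proof. by move=> hp hq i; rewrite coefD; apply: sigpowD. Qed.

Lemma polySN b p : polyS b p -> polyS b (- p).
Proof. by move=> hp i; rewrite coefN; apply: sigpowN. Qed.

Lemma polySB b p q : polyS b p -> polyS b q -> polyS b (p - q).
Proof. by move=> hp hq; apply/polySD/polySN. Qed.

Lemma polyS_le b b' p : (b' <= b)%N -> polyS b p -> polyS b' p.
Proof. by move=> le_b hp i; apply: sigpow_le (hp i). Qed.

Lemma polySM b c p q : polyS b p -> polyS c q -> polyS (b + c) (p * q).
Proof.
move=> hp hq i; rewrite coefM; apply: (big_ind (sigpow (b + c))) => [|x y|j _].
- exact: sigpow0.
- exact: sigpowD.
- exact: sigpowM.
Qed.

Lemma polySMl b p q : polyS 0 p -> polyS b q -> polyS b (p * q).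
Proof. exact: (@polySM 0). Qed.

Lemma polyS_C b c : sigpow b c -> polyS b c%:P.
Proof. by move=> hc i; rewrite coefC; case: (i == 0)%N => //; apply: sigpow0. Qed.

Lemma polyS1 : polyS 0 1.
Proof. exact/polyS_C/sigpow_R/inR1. Qed.

Lemma polySX : polyS 0 'X.
Proof.
by move=> i; rewrite coefX; case: (i == 1)%N; [apply/sigpow_R/inR1 | apply: sigpow0].
Qed.

Lemma polySXn p n : polyS 0 p -> polyS 0 (p ^+ n).
Proof. by move=> hp; elim: n => [|n IH]; [apply: polyS1 | rewrite exprS; apply: polySMl]. Qed.

Lemma polyS_comp b p q : polyS b p -> polyS 0 q -> polyS b (p \Po q).
Proof.
move=> hp hq i; rewrite comp_polyE coef_sum.
apply: (big_ind (sigpow b)) => [|x y|j _]; [exact: sigpow0 | exact: sigpowD |].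
by rewrite coefZ -[b]addn0; apply/sigpowM/polySXn.
Qed.

Lemma tF_neq0 : tF != 0.
Proof. by rewrite tofrac_eq0 polyX_eq0. Qed.

Definition inJ a b (f : Fld) :=
  exists p n, polyS b p /\ f = tofrac (('X - 1) ^+ a * p) / tF ^+ n.

Lemma inJD a b f g : inJ a b f -> inJ a b g -> inJ a b (f + g).
Proof.
move=> [p [n [hp ->]]] [q [m [hq ->]]].
exists (p * 'X^m + q * 'X^n), (n + m)%N; split.
  by apply: polySD; rewrite -[b]addn0; apply/polySM/polySXn/polySX.
rewrite add_div_pow ?tF_neq0 //; congr (_ / _).
by rewrite -!tofracXn -!tofracM -tofracD mulrDr !mulrA.
Qed.

Lemma inJM a b c e f g : inJ a b f -> inJ c e g -> inJ (a + c) (b + e) (f * g).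
Proof.
move=> [p [n [hp ->]]] [q [m [hq ->]]].
exists (p * q), (n + m)%N; split; first exact: polySM.
rewrite mul_div_pow ?tF_neq0 //; congr (_ / _).
by rewrite -tofracM exprD -!mulrA [p * (_ * q)]mulrCA.
Qed.

Lemma inJ_le a b a' b' f : (a' <= a)%N -> (b' <= b)%N -> inJ a b f -> inJ a' b' f.
Proof.
move=> le_a le_b [p [n [hp ->]]].
exists (('X - 1) ^+ (a - a') * p), n; split.
  by apply: polySMl; [apply/polySXn/polySB; [apply: polySX | apply: polyS1] | apply: polyS_le hp].
by rewrite mulrA -exprD subnKC.
Qed.

Lemma inJ_cF b c : sigpow b c -> inJ 0 b (cF c).
Proof. by move=> hc; exists c%:P, 0%N; split; [apply: polyS_C | rewrite mul1r divr1]. Qed.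

Lemma inJ_R c : inR c -> inJ 0 0 (cF c).
Proof. by move=> hc; apply/inJ_cF/sigpow_R. Qed.

Lemma inJ0 a b : inJ a b 0.
Proof. by exists 0, 0%N; split; [apply: polyS0 | rewrite mulr0 tofrac0 mul0r]. Qed.

Lemma inJ1 : inJ 0 0 1.
Proof. by exists 1, 0%N; split; [apply: polyS1 | rewrite mulr1 tofrac1 divr1]. Qed.

Lemma inJ_tV : inJ 0 0 tF^-1.
Proof. by exists 1, 1%N; split; [apply: polyS1 | rewrite mul1r tofrac1 div1r]. Qed.

Lemma inJ_s : inJ 1 0 (tF - 1).
Proof. by exists 1, 0%N; split; [apply: polyS1 | rewrite mulr1 divr1 tofracB tofrac1]. Qed.

Lemma inJN a b f : inJ a b f -> inJ a b (- f).
Proof.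
by move=> [p [n [hp ->]]]; exists (- p), n; split; [apply: polySN | rewrite mulrN tofracN mulNr].
Qed.

Definition mxJ a b (M : Mat) := forall i j, inJ a b (M i j).

Lemma mxJD a b M N : mxJ a b M -> mxJ a b N -> mxJ a b (M + N).
Proof. by move=> hM hN i j; rewrite mxE; apply: inJD. Qed.

Lemma mxJN a b M : mxJ a b M -> mxJ a b (- M).
Proof. by move=> hM i j; rewrite mxE; apply: inJN. Qed.

Lemma mxJB a b M N : mxJ a b M -> mxJ a b N -> mxJ a b (M - N).
Proof. by move=> hM hN; apply/mxJD/mxJN. Qed.

Lemma mxJM a b c e M N : mxJ a b M -> mxJ c e N -> mxJ (a + c) (b + e) (M * N).
Proof. by move=> hM hN i j; rewrite mulmx2E; apply: inJD; apply: inJM. Qed.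

Lemma mxJZ a b c e f M : inJ c e f -> mxJ a b M -> mxJ (c + a) (e + b) (f *: M).
Proof. by move=> hf hM i j; rewrite mxE; apply: inJM. Qed.

Lemma mxJ_le a b a' b' M : (a' <= a)%N -> (b' <= b)%N -> mxJ a b M -> mxJ a' b' M.
Proof. by move=> le_a le_b hM i j; apply: inJ_le (hM i j). Qed.

Lemma mxJM_le a b c e a' b' M N : mxJ a b M -> mxJ c e N ->
  (a' <= a + c)%N -> (b' <= b + e)%N -> mxJ a' b' (M * N).
Proof. by move=> hM hN le_a le_b; apply/(mxJ_le le_a le_b)/mxJM. Qed.

Lemma mxJZ_le a b c e a' b' f M : inJ c e f -> mxJ a b M ->
  (a' <= c + a)%N -> (b' <= e + b)%N -> mxJ a' b' (f *: M).
Proof. by move=> hf hM le_a le_b; apply/(mxJ_le le_a le_b)/mxJZ. Qed.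

Lemma mxJ0 a b : mxJ a b 0.
Proof. by move=> i j; rewrite mxE; apply: inJ0. Qed.

Lemma mxJ1 : mxJ 0 0 1.
Proof. by move=> i j; rewrite idmx2E; case: (i == j); [apply: inJ1 | apply: inJ0]. Qed.

Lemma mxJ_mx2 k l a b c d : inJ k l a -> inJ k l b -> inJ k l c -> inJ k l d ->
  mxJ k l (mx2 a b c d).
Proof. by move=> ha hb hc hd; apply: ord2P; apply: ord2P; rewrite mxE. Qed.

(** * Normal forms of the generators of [F] *)

Lemma cFD a b : cF (a + b) = cF a + cF b. Proof. by rewrite /cF polyCD tofracD. Qed.
Lemma cFM a b : cF (a * b) = cF a * cF b. Proof. by rewrite /cF polyCM tofracM. Qed.
Lemma cFN a : cF (- a) = - cF a. Proof. by rewrite /cF polyCN tofracN. Qed.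
Lemma cFB a b : cF (a - b) = cF a - cF b. Proof. by rewrite cFD cFN. Qed.
Lemma cF0 : cF 0 = 0. Proof. by rewrite /cF tofrac0. Qed.
Lemma cF1 : cF 1 = 1. Proof. by rewrite /cF tofrac1. Qed.

Lemma cF_eq0 a : (cF a == 0) = (a == 0).
Proof. by rewrite tofrac_eq0 polyC_eq0. Qed.

Lemma cFV a : cF a^-1 = (cF a)^-1.
Proof.
have [->|a0] := eqVneq a 0; first by rewrite invr0 cF0 invr0.
by apply/esym/mulr1_eq; rewrite -cFM mulfV // cF1.
Qed.

Definition cFE := (cFD, cFB, cFM, cFN, cFV, cF0, cF1).

Definition V1 := cF (1 - yR).
Definition V2 := cF (xR - 1).
Notation vF := (vmx V1 V2).
Notation nF := (nmx V1 V2).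
Notation pF := (pmx Fld).
Notation gpartF w1 w2 be := (gpart V1 V2 (tF - 1) (cF w1) (cF w2) be).
Definition kdot := vdot (1 - yR) (xR - 1).

Lemma cF_kdot w1 w2 : cF (kdot w1 w2) = vdot V1 V2 (cF w1) (cF w2).
Proof. by rewrite /kdot /vdot /V1 /V2 !cFE. Qed.

Lemma inJ_V1 : inJ 0 1 V1. Proof. exact/inJ_cF/sigpow_Sigma/inSigma_1y. Qed.
Lemma inJ_V2 : inJ 0 1 V2. Proof. exact/inJ_cF/sigpow_Sigma/inSigma_x1. Qed.

Lemma inR_kdot w1 w2 : inR w1 -> inR w2 -> inR (kdot w1 w2).
Proof. by move=> h1 h2; apply: inRD; apply: inRM => //; [apply: inRB inR1 inR_y | apply: inRB inR_x inR1]. Qed.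

Lemma mxJ_vF w1 w2 : inJ 0 0 w1 -> inJ 0 0 w2 -> mxJ 0 1 (vF w1 w2).
Proof.
have hV1 := inJ_V1; have hV2 := inJ_V2.
by move=> h1 h2; apply: mxJ_mx2; apply: (inJM (a := 0) (b := 1) (c := 0) (e := 0)).
Qed.

Lemma mxJ_nF : mxJ 0 2 nF.
Proof.
have hV1 := inJ_V1; have hV2 := inJ_V2.
by apply: mxJ_mx2; apply: (inJM (a := 0) (b := 1) (c := 0) (e := 1)) => //; apply: inJN.
Qed.

Lemma mxJ_pF : mxJ 0 0 pF.
Proof. by apply: mxJ_mx2; [apply: inJ1 | apply: inJ0 | apply/inJN/inJ1 | apply: inJ0]. Qed.

Lemma mxJ_gpartF w1 w2 be : inR w1 -> inR w2 -> inJ 0 0 be -> mxJ 0 0 (gpartF w1 w2 be).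
Proof.
move=> h1 h2 hbe; apply: mxJD; first exact/(mxJ_le (a := 0) (b := 1))/mxJ_vF/inJ_R/h2/inJ_R.
by apply: (mxJZ_le (c := 1) (e := 0)) mxJ_pF _ _ => //; apply/(inJM inJ_s).
Qed.

Lemma mulmx1_inv (g h : Mat) : g * h = 1 -> g^-1 = h.
Proof.
move=> gh1; have [ug _] := mulmx1_unit gh1.
by rewrite -[LHS]mulr1 -gh1 (mulKr ug).
Qed.

(* [g] is a unit of [M_2(R[t, t^-1])]. *)
Definition lunit (g : Mat) := [/\ g \is a GRing.unit, mxJ 0 0 g & mxJ 0 0 g^-1].

Lemma lunit1 : lunit 1.
Proof. by split; rewrite ?invr1; [apply: unitr1 | apply: mxJ1 | apply: mxJ1]. Qed.

Lemma lunitM g h : lunit g -> lunit h -> lunit (g * h).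
Proof.
move=> [ug g0 gV] [uh h0 hV]; split.
- rewrite (unitrMl _ uh); exact: ug.
- exact: (mxJM (a := 0) (b := 0)).
- rewrite (invrM ug uh); exact: (mxJM (a := 0) (b := 0)).
Qed.

Lemma lunitV g : lunit g -> lunit g^-1.
Proof. move=> [ug g0 gV]; split; rewrite ?unitrV ?invrK; [exact: ug | exact: gV | exact: g0]. Qed.

Lemma lunit_mul1 g h : g * h = 1 -> mxJ 0 0 g -> mxJ 0 0 h -> lunit g.
Proof.
move=> gh1 g0 h0; have [ug _] := mulmx1_unit gh1.
by split; rewrite ?(mulmx1_inv gh1); [exact: ug | |].
Qed.

Lemma lunit_sub1 g : lunit g -> mxJ 0 0 (g - 1).
Proof. by move=> [_ g0 _]; apply: mxJB g0 mxJ1. Qed.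

Definition unitR (a : Kxy) := a != 0 /\ inR a^-1.

Lemma unitRM a b : unitR a -> unitR b -> unitR (a * b).
Proof. move=> [a0 aV] [b0 bV]; split; [exact: mulf_neq0 a0 b0 | rewrite invfM; exact: inRM]. Qed.

(* [g = 1 + v w^T + (t - 1) be P] modulo [(t - 1) Sigma], with [1 + w^T v] a unit of [R]. *)
Definition gform_at (g : Mat) w1 w2 be :=
  [/\ inR w1, inR w2, unitR (1 + kdot w1 w2), inJ 0 0 be
    & mxJ 1 1 (g - 1 - gpartF w1 w2 be)].

Definition gform g := lunit g /\ exists w1 w2 be, gform_at g w1 w2 be.

Lemma gform_atM g h w1 w2 be w1' w2' be' : lunit h ->
  gform_at g w1 w2 be -> gform_at h w1' w2' be' ->
  gform_at (g * h) (w1 + w1' + kdot w1 w2 * w1') (w2 + w2' + kdot w1 w2 * w2')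
                   (be + be' + (tF - 1) * be * be').
Proof.
move=> uh [h1 h2 hu hbe hE] [h1' h2' hu' hbe' hE'].
split.
- by apply: inRD; [apply: inRD | apply: inRM; first apply: inR_kdot].
- by apply: inRD; [apply: inRD | apply: inRM; first apply: inR_kdot].
- by rewrite /kdot vdot_compose; apply: unitRM.
- apply: inJD; first exact: inJD.
  apply: (inJ_le (a := 1) (b := 0)) => //.
  exact: (inJM (a := 1) (b := 0) (c := 0) (e := 0) (inJM inJ_s hbe) hbe').
move: (kdot w1 w2) (cF_kdot w1 w2) => k hk.
rewrite !cFE hk gpart_mul_residual.
have hV := mxJ_vF (inJ_R h1) (inJ_R h2).
have hV' := mxJ_vF (inJ_R h1') (inJ_R h2').
have hsbe := inJM inJ_s hbe; have hsbe' := inJM inJ_s hbe'.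
apply: mxJD; last exact: (mxJM_le hE (lunit_sub1 uh)).
apply: mxJD; last exact: (mxJM_le (mxJ_gpartF h1 h2 hbe) hE').
apply: mxJD; last exact: hE'.
apply: mxJD; last exact: hE.
apply: mxJD; first exact: (mxJZ_le hsbe' (mxJM hV mxJ_pF)).
exact: (mxJZ_le hsbe (mxJM mxJ_pF hV')).
Qed.

Lemma gform_of_eq g g' w1 w2 be E : g * g' = 1 -> mxJ 0 0 g' ->
  inR w1 -> inR w2 -> unitR (1 + kdot w1 w2) -> inJ 0 0 be -> mxJ 1 1 E ->
  g = 1 + gpartF w1 w2 be + E -> gform g.
Proof.
move=> gg' g'0 h1 h2 hu hbe hE hg; split; last first.
  by exists w1, w2, be; split; rewrite // hg -addrA -opprD [_ + E]addrC addrK.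
apply: lunit_mul1 gg' _ g'0; rewrite hg.
apply/mxJD/(mxJ_le (a := 1) (b := 1)) => //.
exact/mxJD/mxJ_gpartF/hbe/h2/h1/mxJ1.
Qed.

Lemma unitR_x : unitR xR. Proof. exact: (conj xR_neq0 inR_xV). Qed.
Lemma unitR_y : unitR yR. Proof. exact: (conj yR_neq0 inR_yV). Qed.

Lemma unitR_xV : unitR xR^-1.
Proof. by split; rewrite ?invrK; [rewrite invr_eq0; exact: xR_neq0 | exact: inR_x]. Qed.

Lemma unitR_yV : unitR yR^-1.
Proof. by split; rewrite ?invrK; [rewrite invr_eq0; exact: yR_neq0 | exact: inR_y]. Qed.

Section Generators.
Variables (F : fieldType) (v1 v2 t : F).

Lemma gen1E : mx2 1 v1 0 (1 + v2) = 1 + gpart v1 v2 (t - 1) 0 1 0 + 0.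
Proof. rewrite /gpart /vmx /pmx; mx2_ring. Qed.

Lemma gen1_inv : 1 + v2 != 0 ->
  mx2 1 v1 0 (1 + v2) * (1 + gpart v1 v2 (t - 1) 0 (- (1 + v2)^-1) 0) = 1.
Proof.
move=> x0; rewrite /gpart /vmx /pmx.
by apply: mx2_ext; rewrite ?(mulmx2E, idmx2E, mxE) /=; field.
Qed.

Lemma gen2E : mx2 ((1 - v1) * t) 0 (1 - (1 + v2) * t) 1
  = 1 + gpart v1 v2 (t - 1) (-1) 0 1 + (t - 1) *: vmx v1 v2 (-1) 0.
Proof. rewrite /gpart /vmx /pmx; mx2_ring. Qed.

Lemma gen2_inv : 1 - v1 != 0 -> t != 0 ->
  mx2 ((1 - v1) * t) 0 (1 - (1 + v2) * t) 1
  * (1 + gpart v1 v2 (t - 1) (1 - v1)^-1 0 (- (1 - v1)^-1 / t)) = 1.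
Proof.
move=> y0 t0; rewrite /gpart /vmx /pmx.
by apply: mx2_ext; rewrite ?(mulmx2E, idmx2E, mxE) /=; field; rewrite y0 t0.
Qed.

Lemma vdot_gen1 : 1 + vdot v1 v2 0 1 = 1 + v2.
Proof. rewrite /vdot; ring. Qed.

Lemma vdot_gen1_inv : 1 + v2 != 0 -> 1 + vdot v1 v2 0 (- (1 + v2)^-1) = (1 + v2)^-1.
Proof. by move=> x0; rewrite /vdot; field. Qed.

Lemma vdot_gen2 : 1 + vdot v1 v2 (-1) 0 = 1 - v1.
Proof. rewrite /vdot; ring. Qed.

Lemma vdot_gen2_inv : 1 - v1 != 0 -> 1 + vdot v1 v2 (1 - v1)^-1 0 = (1 - v1)^-1.
Proof. by move=> y0; rewrite /vdot; field. Qed.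
End Generators.

Lemma V2_x : 1 + V2 = cF xR. Proof. by rewrite /V2 cFB cF1 subrKC. Qed.
Lemma V1_y : 1 - V1 = cF yR. Proof. by rewrite /V1 cFB cF1 subKr. Qed.

Lemma V2_neq : 1 + V2 != 0. Proof. by rewrite V2_x cF_eq0; exact: xR_neq0. Qed.
Lemma V1_neq : 1 - V1 != 0. Proof. by rewrite V1_y cF_eq0; exact: yR_neq0. Qed.

Lemma M1E : M1 = mx2 1 V1 0 (1 + V2).
Proof. apply: mx2_ext; rewrite !mxE /= ?V2_x; reflexivity. Qed.

Lemma M2TE : M2T = mx2 ((1 - V1) * tF) 0 (1 - (1 + V2) * tF) 1.
Proof. apply: mx2_ext; rewrite !mxE /= ?V1_y ?V2_x; reflexivity. Qed.

Definition M1i : Mat := 1 + gpartF 0 (- xR^-1) 0.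
Definition M2Ti : Mat := 1 + gpartF yR^-1 0 (- cF yR^-1 / tF).

Lemma M1_M1i : M1 * M1i = 1.
Proof. by rewrite M1E /M1i cF0 cFN cFV -V2_x; apply: gen1_inv V2_neq. Qed.

Lemma M2T_M2Ti : M2T * M2Ti = 1.
Proof. by rewrite M2TE /M2Ti cF0 !cFV -V1_y; apply: gen2_inv V1_neq tF_neq0. Qed.

Lemma gform_M1 : gform M1.
Proof.
apply: (gform_of_eq (w1 := 0) (w2 := 1) (be := 0) (E := 0) M1_M1i).
- exact/mxJD/mxJ_gpartF/inJ0/inRN/inR_xV/inR0/mxJ1.
- exact: inR0.
- exact: inR1.
- by rewrite /kdot vdot_gen1 subrKC; exact: unitR_x.
- exact: inJ0.
- exact: mxJ0.
- by rewrite cF0 cF1 M1E (gen1E _ _ tF).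
Qed.

Lemma gform_M1V : gform M1^-1.
Proof.
rewrite (mulmx1_inv M1_M1i).
apply: (gform_of_eq (w1 := 0) (w2 := - xR^-1) (be := 0) (E := 0) (mulmx1C M1_M1i)).
- by case: gform_M1 => -[].
- exact: inR0.
- exact/inRN/inR_xV.
- have := @vdot_gen1_inv _ (1 - yR) (xR - 1); rewrite subrKC /kdot => ->.
    exact: unitR_xV.
  exact: xR_neq0.
- exact: inJ0.
- exact: mxJ0.
- by rewrite addr0.
Qed.

Lemma gform_M2T : gform M2T.
Proof.
apply: (gform_of_eq (w1 := -1) (w2 := 0) (be := 1) M2T_M2Ti).
- apply/mxJD/mxJ_gpartF/(inJM (a := 0) (b := 0) (c := 0) (e := 0))/inJ_tV; first exact: mxJ1.
  + exact: inR_yV.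
  + exact: inR0.
  + exact/inJN/inJ_R/inR_yV.
- exact/inRN/inR1.
- exact: inR0.
- by rewrite /kdot vdot_gen2 subKr; exact: unitR_y.
- exact: inJ1.
- apply: (mxJZ_le (a := 0) (b := 1) (c := 1) (e := 0) inJ_s) => //.
  by apply: mxJ_vF; apply: inJ_R; [apply/inRN/inR1 | apply: inR0].
- by rewrite M2TE (gen2E _ _ tF) cFN cF1 cF0.
Qed.

Lemma gform_M2TV : gform M2T^-1.
Proof.
rewrite (mulmx1_inv M2T_M2Ti).
apply: (gform_of_eq (w1 := yR^-1) (w2 := 0) (E := 0) (mulmx1C M2T_M2Ti)).
- by case: gform_M2T => -[].
- exact: inR_yV.
- exact: inR0.
- have := @vdot_gen2_inv _ (1 - yR) (xR - 1); rewrite subKr /kdot => ->.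
    exact: unitR_yV.
  exact: yR_neq0.
- exact/(inJM (a := 0) (b := 0) (c := 0) (e := 0))/inJ_tV/inJN/inJ_R/inR_yV.
- exact: mxJ0.
- by rewrite addr0.
Qed.

Lemma gformM g h : gform g -> gform h -> gform (g * h).
Proof.
move=> [ug [w1 [w2 [be gw]]]] [uh [w1' [w2' [be' hw]]]].
split; first exact: lunitM.
exists (w1 + w1' + kdot w1 w2 * w1'), (w2 + w2' + kdot w1 w2 * w2'),
  (be + be' + (tF - 1) * be * be').
exact: gform_atM.
Qed.

Lemma gform1 : gform 1.
Proof.
have [[uM1 _ _] _] := gform_M1.
by have := gformM gform_M1 gform_M1V; rewrite (mulrV uM1).
Qed.

Lemma gen_ind (S T : Mat -> Prop) : T 1 -> (forall a b, T a -> T b -> T (a * b)) ->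
  (forall a, S a -> T a /\ T a^-1) -> forall g, gen S g -> T g.
Proof.
move=> T1 TM TS g; elim=> [//|a b /TS[Ta _] _ Tb|a b /TS[_ TaV] _ Tb]; exact: TM.
Qed.

Lemma Fgroup_gform g : Fgroup g -> gform g.
Proof.
apply: gen_ind; [exact: gform1 | exact: gformM |].
move=> a [->|->]; split;
  [exact: gform_M1 | exact: gform_M1V | exact: gform_M2T | exact: gform_M2TV].
Qed.

(** * Commutators and the derived series *)

Lemma mul_sub1 (R : pzRingType) (g h : R) :
  g * h - 1 = (g - 1) + (h - 1) + (g - 1) * (h - 1).
Proof.
by rewrite mulrBl mulrBr !mul1r mulr1 -addrA addrC [h - 1 + _]addrC subrK addrA subrK.
Qed.

Lemma commr_sub1 (R : pzRingType) (g h : R) :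
  (g - 1) * (h - 1) - (h - 1) * (g - 1) = g * h - h * g.
Proof.
have sub1E (a b : R) : (a - 1) * (b - 1) = a * b - 1 - ((a - 1) + (b - 1)).
  by rewrite mul_sub1 [_ + (a - 1) * _]addrC addrK.
by rewrite !sub1E [h - 1 + _]addrC opprB addrA subrK opprB addrA subrK.
Qed.

Section UnitRingCommutator.
Variables (R : unitRingType) (a b : R).
Hypotheses (ua : a \is a GRing.unit) (ub : b \is a GRing.unit).

Lemma comm_sub1 :
  a^-1 * b^-1 * a * b - 1 = (b * a)^-1 * ((a - 1) * (b - 1) - (b - 1) * (a - 1)).
Proof.
have uba : b * a \is a GRing.unit by rewrite (unitrMl _ ua).
by rewrite commr_sub1 mulrBr (mulVr uba) (invrM ub ua) !mulrA.
Qed.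

Lemma commV : (a^-1 * b^-1 * a * b)^-1 = b^-1 * a^-1 * b * a.
Proof.
have uab : a^-1 * b^-1 * a * b \is a GRing.unit by rewrite !unitrMl ?unitrV.
have XY : a^-1 * b^-1 * a * b * (b^-1 * a^-1 * b * a) = 1.
  by rewrite !mulrA (mulrK ub) (mulrK ua) (mulrVK ub) (mulVr ua).
by rewrite -[LHS]mulr1 -XY (mulKr uab).
Qed.
End UnitRingCommutator.

Lemma mulr_subZ (R : pzRingType) (A : algType R) (M B N : A) (m i : R) :
  M * B - (m * i) *: N = M * (B - m *: N) + m *: (M * N - i *: N).
Proof. by rewrite mulrBr scalerBr scalerA -scalerAr addrA subrK. Qed.

Lemma invr_subZ (F : fieldType) (A : unitAlgType F) (c N : A) (k : F) :
  c \is a GRing.unit -> k != 0 ->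
  c^-1 * N - k^-1 *: N = k^-1 *: (c^-1 * (k *: N - c * N)).
Proof.
move=> uc k0; rewrite mulrBr -scalerAr (mulKr uc) scalerBr scalerA.
by rewrite mulVf // scale1r.
Qed.

Definition comm (a b : Mat) := a^-1 * b^-1 * a * b.

Lemma lunit_comm a b : lunit a -> lunit b -> lunit (comm a b).
Proof. by move=> ua ub; apply: (lunitM (lunitM (lunitM (lunitV ua) (lunitV ub)) ua) ub). Qed.

Lemma lunit_comm_sub1 a b : lunit a -> lunit b ->
  comm a b - 1 = (b * a)^-1 * ((a - 1) * (b - 1) - (b - 1) * (a - 1)).
Proof. by move=> [ua _ _] [ub _ _]; exact: comm_sub1 ua ub. Qed.

Lemma mxJ_invM a b : lunit a -> lunit b -> mxJ 0 0 (b * a)^-1.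
Proof. by move=> ua ub; case: (lunitM ub ua). Qed.

Lemma commutator_subgroup_ind (H T : Mat -> Prop) :
  (forall g, H g -> lunit g) -> T 1 -> (forall a b, T a -> T b -> T (a * b)) ->
  (forall a b, H a -> H b -> T (comm a b)) -> forall g, commutator_subgroup H g -> T g.
Proof.
move=> Hunit T1 TM Tcomm; apply: gen_ind => // c [a [b [Ha [Hb ->]]]].
have [[ua _ _] [ub _ _]] := (Hunit a Ha, Hunit b Hb).
by split; [apply: Tcomm | rewrite (commV ua ub); apply: Tcomm].
Qed.

Definition cong a b g := lunit g /\ mxJ a b (g - 1).

Lemma cong1 a b : cong a b 1.
Proof. by split; [apply: lunit1 | rewrite subrr; apply: mxJ0]. Qed.

Lemma congM a b g h : cong a b g -> cong a b h -> cong a b (g * h).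
Proof.
move=> [ug hg] [uh hh]; split; first exact: lunitM.
by rewrite mul_sub1; apply/mxJD/(mxJM_le hg hh); rewrite ?leq_addr //; apply: mxJD.
Qed.

Lemma cong_comm a b g h : cong a b g -> cong a b h -> cong (a + a) (b + b) (comm g h).
Proof.
move=> [ug hg] [uh hh]; split; first exact: lunit_comm.
rewrite (lunit_comm_sub1 ug uh).
exact/(mxJM (mxJ_invM ug uh))/mxJB/(mxJM hh hg)/(mxJM hg hh).
Qed.

Definition nform g := lunit g /\ exists l, inR l /\ mxJ 1 1 (g - 1 - cF l *: nF).

Lemma nform1 : nform 1.
Proof.
split; first exact: lunit1.
by exists 0; split; [apply: inR0 | rewrite cF0 scale0r subrr subr0; apply: mxJ0].
Qed.

Lemma nformM g h : nform g -> nform h -> nform (g * h).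
Proof.
move=> [ug [l [hl hE]]] [uh [m [hm hE']]]; split; first exact: lunitM.
exists (l + m); split; first exact: inRD.
rewrite cFD nmx_mul_residual.
apply: mxJD; last exact: (mxJM_le hE (lunit_sub1 uh)).
apply: mxJD; first exact: (mxJD hE hE').
exact: (mxJZ_le (inJ_R hl) (mxJM mxJ_nF hE')).
Qed.

Lemma nform_comm a b : nform a -> nform b -> cong 1 2 (comm a b).
Proof.
move=> [ua [l [hl hE]]] [ub [m [hm hE']]]; split; first exact: lunit_comm.
rewrite (lunit_comm_sub1 ua ub) (@nmx_comm_residual _ V1 V2 a b (cF l) (cF m)).
apply: (mxJM_le (c := 1) (e := 2) (mxJ_invM ua ub)) => //.
have hN := mxJ_nF.
apply: mxJD; first apply: mxJD.
- apply: (mxJZ_le (a := 1) (b := 2) (inJ_R hl) _ (leqnn 1) (leqnn 2)).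
  by apply: mxJB; [apply: (mxJM_le hN hE') | apply: (mxJM_le hE' hN)].
- apply: (mxJZ_le (a := 1) (b := 2) (inJ_R hm) _ (leqnn 1) (leqnn 2)).
  by apply: mxJB; [apply: (mxJM_le hE hN) | apply: (mxJM_le hN hE)].
- by apply: mxJB; [apply: (mxJM_le hE hE') | apply: (mxJM_le hE' hE)].
Qed.

Lemma gform_at_bracket a b w1 w2 be w1' w2' be' : lunit a -> lunit b ->
  gform_at a w1 w2 be -> gform_at b w1' w2' be' ->
  mxJ 1 1 ((a - 1) * (b - 1) - (b - 1) * (a - 1) - cF (w2 * w1' - w1 * w2') *: nF).
Proof.
move=> ua ub [h1 h2 _ hbe hE] [h1' h2' _ hbe' hE'].
rewrite !cFE (@gpart_comm_residual _ V1 V2 a b (tF - 1) _ _ _ _ be be').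
have hV := mxJ_vF (inJ_R h1) (inJ_R h2).
have hV' := mxJ_vF (inJ_R h1') (inJ_R h2').
have hsbe := inJM inJ_s hbe; have hsbe' := inJM inJ_s hbe'.
apply: mxJB; last exact: (mxJM_le hE' (lunit_sub1 ua)).
apply: mxJB; last exact: (mxJM_le (mxJ_gpartF h1' h2' hbe') hE).
apply: mxJD; last exact: (mxJM_le hE (lunit_sub1 ub)).
apply: mxJD; last exact: (mxJM_le (mxJ_gpartF h1 h2 hbe) hE').
apply: mxJD.
- apply: (mxJZ_le (a := 0) (b := 1) hsbe') => //.
  by apply: mxJB; [apply: mxJM hV mxJ_pF | apply: mxJM mxJ_pF hV].
- apply: (mxJZ_le (a := 0) (b := 1) hsbe) => //.
  by apply: mxJB; [apply: mxJM mxJ_pF hV' | apply: mxJM hV' mxJ_pF].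
Qed.

Lemma gform_at_mul_nF c w1 w2 be : gform_at c w1 w2 be ->
  mxJ 1 1 (c * nF - cF (1 + kdot w1 w2) *: nF).
Proof.
move=> [_ _ _ hbe hE].
rewrite cFD cF1 cF_kdot (@gpart_mul_nmx_residual _ V1 V2 c (tF - 1) _ _ be).
apply: mxJD; last exact: (mxJM_le (c := 0) (e := 2) hE mxJ_nF).
exact: (mxJZ_le (a := 0) (b := 2) (inJM inJ_s hbe) (mxJM mxJ_pF mxJ_nF)).
Qed.

Lemma lunit_inv_mul_nF c k : lunit c -> unitR k ->
  mxJ 1 1 (c * nF - cF k *: nF) -> mxJ 1 1 (c^-1 * nF - cF k^-1 *: nF).
Proof.
move=> [uc _ cV] [k0 kV] hc; have cFk0 : cF k != 0 by rewrite cF_eq0.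
have hc' : mxJ 1 1 (cF k *: nF - c * nF) by rewrite -opprB; apply: mxJN.
rewrite cFV (invr_subZ _ uc cFk0) -cFV.
apply: (mxJZ_le (a := 1) (b := 1) (inJ_R kV)) => //.
exact: (mxJM_le (a := 0) (b := 0) cV hc').
Qed.

Lemma gform_comm a b : gform a -> gform b -> nform (comm a b).
Proof.
move=> [ua [w1 [w2 [be ha]]]] [ub [w1' [w2' [be' hb]]]].
split; first exact: lunit_comm.
have [h1 h2 _ _ _] := ha; have [h1' h2' _ _ _] := hb.
have hw : inR (w2 * w1' - w1 * w2') by apply: inRB; apply: inRM.
have hba := gform_atM ua hb ha; set u1 := (w1' + _ + _) in hba; set u2 := (w2' + _ + _) in hba.
have [_ _ hu _ _] := hba.
exists ((w2 * w1' - w1 * w2') * (1 + kdot u1 u2)^-1); split.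
  by apply: inRM hw _; case: hu.
rewrite (lunit_comm_sub1 ua ub) cFM mulr_subZ.
apply: mxJD; first exact: (mxJM_le (mxJ_invM ua ub) (gform_at_bracket ua ub ha hb)).
apply: (mxJZ_le (a := 1) (b := 1) (inJ_R hw) _ (leqnn 1) (leqnn 1)).
exact: (lunit_inv_mul_nF (lunitM ub ua) hu (gform_at_mul_nF hba)).
Qed.

Lemma derived1_nform g : derived 1 g -> nform g.
Proof.
apply: (commutator_subgroup_ind (H := Fgroup)); [|exact: nform1|exact: nformM|].
- by move=> x /Fgroup_gform[ux _]; exact: ux.
- by move=> a b /Fgroup_gform ha /Fgroup_gform hb; apply: gform_comm.
Qed.

Lemma derived_cong k g : derived k.+2 g -> cong (2 ^ k) (2 ^ k.+1) g.
Proof.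
elim: k g => [|k IH] g.
  apply: (commutator_subgroup_ind (H := derived 1)); [|exact: cong1|exact: congM|].
  - by move=> x /derived1_nform[ux _]; exact: ux.
  - by move=> a b /derived1_nform ha /derived1_nform hb; apply: nform_comm.
apply: (commutator_subgroup_ind (H := derived k.+2)); [|exact: cong1|exact: congM|].
- by move=> x /IH[ux _]; exact: ux.
- move=> a b /IH ha /IH hb.
  have double n : (2 ^ n.+1 = 2 ^ n + 2 ^ n)%N by rewrite expnS mul2n addnn.
  by have := cong_comm ha hb; rewrite -!double.
Qed.

(** * The expansion in powers of [t - 1] *)

Definition eq_upto N (p q : {poly Kxy}) := forall i, (i < N)%N -> p`_i = q`_i.

Lemma eq_upto_trans N p q r : eq_upto N p q -> eq_upto N q r -> eq_upto N p r.
Proof. by move=> pq qr i lt_iN; rewrite pq // qr. Qed.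

Lemma eq_uptoM N p q p' q' : eq_upto N p p' -> eq_upto N q q' -> eq_upto N (p * q) (p' * q').
Proof.
move=> pp' qq' i lt_iN; rewrite !coefM; apply: eq_bigr => -[j /= le_ji] _.
have lt_jN : (j < N)%N by apply: leq_ltn_trans lt_iN; rewrite -ltnS.
have lt_ijN : (i - j < N)%N by apply: leq_ltn_trans (leq_subr j i) lt_iN.
by rewrite pp' // qq'.
Qed.

Lemma eq_uptoX N p q n : eq_upto N p q -> eq_upto N (p ^+ n) (q ^+ n).
Proof.
by move=> pq; elim: n => [|n IH]; [move=> i | rewrite !exprS; apply: eq_uptoM].
Qed.

Definition ps_trunc (f : ps) N : {poly Kxy} := \poly_(i < N) f i.

Lemma ps_trunc_mul f g N : eq_upto N (ps_trunc (ps_mul f g) N) (ps_trunc f N * ps_trunc g N).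
Proof.
move=> i lt_iN; rewrite coef_poly lt_iN coefM; apply: eq_bigr => -[j /= le_ji] _.
have lt_jN : (j < N)%N by apply: leq_ltn_trans lt_iN; rewrite -ltnS.
have lt_ijN : (i - j < N)%N by apply: leq_ltn_trans (leq_subr j i) lt_iN.
by rewrite !coef_poly lt_jN lt_ijN.
Qed.

Lemma ps_trunc_poly p N : eq_upto N (ps_trunc (ps_of_poly p) N) p.
Proof. by move=> i lt_iN; rewrite coef_poly lt_iN. Qed.

Lemma ps_trunc_pow f n N : eq_upto N (ps_trunc (ps_pow f n) N) (ps_trunc f N ^+ n).
Proof.
elim: n => [|n IH].
  by move=> i lt_iN; rewrite coef_poly lt_iN expr0 coef1 /ps_pow /= /ps_one; case: (i == 0)%N.
have -> : ps_pow f n.+1 = ps_mul f (ps_pow f n) by [].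
rewrite exprS; apply: (eq_upto_trans (@ps_trunc_mul _ _ N)).
exact: (eq_uptoM (fun _ _ => erefl) IH).
Qed.

Lemma ps_trunc_tinv N : eq_upto N (('X + 1) * ps_trunc ps_tinv N) 1.
Proof.
move=> [|i] lt_iN; rewrite mulrDl mul1r coefD coefXM coef1 !coef_poly lt_iN /ps_tinv /=.
  by rewrite add0r expr0.
by rewrite (ltnW lt_iN) exprS mulN1r subrr.
Qed.

Lemma ps_mul_tpow_tinv n : ps_mul (ps_of_poly (('X + 1) ^+ n)) (ps_pow ps_tinv n) = ps_one.
Proof.
apply: functional_extensionality => k.
have := @ps_trunc_mul (ps_of_poly (('X + 1) ^+ n)) (ps_pow ps_tinv n) k.+1 k (ltnSn k).
rewrite coef_poly ltnSn => ->.
rewrite (eq_uptoM (@ps_trunc_poly _ k.+1) (@ps_trunc_pow _ n k.+1)) // -exprMn.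
by rewrite (eq_uptoX n (@ps_trunc_tinv k.+1)) // expr1n coef1 /ps_one; case: (k == 0)%N.
Qed.

Lemma ps_pow_tinv_R n k : inR (ps_pow ps_tinv n k).
Proof.
elim: n k => [|n IH] k; first by rewrite /ps_pow /= /ps_one; case: (k == 0)%N; [apply: inR1 | apply: inR0].
apply: (big_ind inR) => [|x y|j _]; [exact: inR0 | exact: inRD |].
exact/inRM/IH/inRX/inRN/inR1.
Qed.

Lemma ps_mul_polyD p q T m :
  ps_mul (ps_of_poly (p + q)) T m = ps_mul (ps_of_poly p) T m + ps_mul (ps_of_poly q) T m.
Proof. by rewrite /ps_mul -big_split; apply: eq_bigr => i _; rewrite /ps_of_poly coefD mulrDl. Qed.

Lemma ps_mul_polyCM c p T m :
  ps_mul (ps_of_poly (c%:P * p)) T m = c * ps_mul (ps_of_poly p) T m.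
Proof. by rewrite /ps_mul mulr_sumr; apply: eq_bigr => i _; rewrite /ps_of_poly coefCM mulrA. Qed.

Lemma ps_mul_Xn_small d q T m : (m < d)%N -> ps_mul (ps_of_poly ('X^d * q)) T m = 0.
Proof.
move=> lt_md; apply: big1 => -[j /= le_jm] _.
by rewrite /ps_of_poly coefXnM (leq_ltn_trans (le_jm : (j <= m)%N) lt_md) mul0r.
Qed.

Lemma ps_mul_sigpow b d q T m : polyS b q -> (forall k, inR (T k)) ->
  sigpow b (ps_mul (ps_of_poly ('X^d * q)) T m).
Proof.
move=> hq hT; apply: (big_ind (sigpow b)) => [|x y|j _]; [exact: sigpow0 | exact: sigpowD |].
rewrite /ps_of_poly coefXnM; case: (j < d)%N; first by rewrite mul0r; apply: sigpow0.
by rewrite mulrC; apply: sigpowMl.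
Qed.

Lemma comp_poly_exp (p q : {poly Kxy}) n : (p ^+ n) \Po q = (p \Po q) ^+ n.
Proof. exact: rmorphXn. Qed.

Lemma comp_Xm1_Xp1 : ('X - 1) \Po ('X + 1) = 'X :> {poly Kxy}.
Proof. by rewrite comp_polyB comp_polyX -polyC1 comp_polyC polyC1 addrK. Qed.

Lemma sub_div_eq (F : fieldType) (f c b t : F) n : t != 0 -> f - c = b / t ^+ n ->
  f = (c * t ^+ n + b) / t ^+ n.
Proof.
move=> t0 fc; have -> : f = c + b / t ^+ n by rewrite -fc addrC subrK.
by field; rewrite expf_neq0.
Qed.

Lemma cF_natr n : cF n%:R = n%:R.
Proof. by rewrite /cF polyC_natr rmorph_nat. Qed.

Definition expansion_spec d (f : Fld) (c : Kxy) (a : ps) :=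
  [/\ s_expansion f a, a 0%N = c, (forall n, (0 < n < d)%N -> a n = 0)
     & (forall n, (d <= n)%N -> sigpow (2 * d) (a n))].

Lemma s_expansion_inJ (f : Fld) (c : Kxy) d : inR c -> (0 < d)%N ->
  inJ d (2 * d) (f - cF c) -> exists a, expansion_spec d f c a.
Proof.
move=> hc d0 [p [n [hp hf]]].
pose P := c%:P * 'X^n + ('X - 1) ^+ d * p.
pose T := ps_pow ps_tinv n.
pose Z := ps_mul (ps_of_poly ('X^d * (p \Po ('X + 1)))) T.
have aE m : ps_mul (ps_of_poly (P \Po ('X + 1))) T m = c * ps_one m + Z m.
  rewrite /P comp_polyD !comp_polyM comp_polyC !comp_poly_exp comp_Xm1_Xp1 comp_polyX.
  by rewrite ps_mul_polyD ps_mul_polyCM ps_mul_tpow_tinv.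
exists (ps_mul (ps_of_poly (P \Po ('X + 1))) T); split.
- exists P, n; split; last split; last by [].
    have hXm1 : polyS 0 ('X - 1) by apply: polySB; [apply: polySX | apply: polyS1].
    move=> i; apply: (@sigpow_inR 0); apply: polySD.
      exact/polySMl/polySXn/polySX/polyS_C/sigpow_R.
    exact/polySMl/(polyS_le (leq0n _))/hp/polySXn.
  rewrite tofracD tofracM tofracXn.
  exact: sub_div_eq tF_neq0 hf.
- by rewrite aE /ps_one /Z /= (ps_mul_Xn_small _ _ d0) mulr1 addr0.
- move=> m /andP[m0 lt_md].
  by rewrite aE /ps_one /Z eqn0Ngt m0 (ps_mul_Xn_small _ _ lt_md) mulr0 addr0.
- move=> m le_dm; rewrite aE /ps_one /Z eqn0Ngt (leq_trans d0 le_dm) mulr0 add0r.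
  apply: ps_mul_sigpow; last exact: ps_pow_tinv_R.
  by apply: polyS_comp hp _; apply: polySD; [apply: polySX | apply: polyS1].
Qed.

Theorem lemma7 (k : nat) (g : Mat) :
  (1 < k)%N -> derived k g ->
  let d := (2 ^ (k - 2))%N in
  exists A : nat -> 'M[Kxy]_2,
    (forall i j : 'I_2, s_expansion (g i j) (fun n => A n i j)) /\
    A 0%N = 1 /\
    (forall n, (0 < n < d)%N -> A n = 0) /\
    (forall n, (d <= n)%N -> forall i j : 'I_2,
        inR (A n i j) /\ inSigmaPow (2 * d) (A n i j)).
Proof.
case: k => [|[|k]] // _ /derived_cong[_ hG] d.
have d_eq : d = (2 ^ k)%N by rewrite /d !subSS subn0.
have d0 : (0 < d)%N by rewrite d_eq expn_gt0.
have hJ i j : inJ d (2 * d) (g i j - cF (i == j)%:R).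
  by rewrite cF_natr d_eq -expnS; have := hG i j; rewrite !mxE.
pose spec i j := expansion_spec d (g i j) (i == j)%:R.
have [a ha] : exists a : 'I_2 -> 'I_2 -> ps, forall i j, spec i j (a i j).
  apply: (@fin_all_exists _ (fun=> 'I_2 -> ps) (fun i ai => forall j, spec i j (ai j))) => i.
  apply: (@fin_all_exists _ (fun=> ps) (spec i)) => j.
  exact: s_expansion_inJ (inR_natr _) d0 (hJ i j).
exists (fun n => \matrix_(i, j) a i j n); split; [|split; [|split]].
- move=> i j; have [expa _ _ _] := ha i j.
  suff -> : (fun n => (\matrix_(i, j) a i j n) i j) = a i j by [].
  by apply: functional_extensionality => n; rewrite mxE.
- by apply/matrixP => i j; have [_ a0 _ _] := ha i j; rewrite !mxE a0.
- by move=> n hn; apply/matrixP => i j; have [_ _ an _] := ha i j; rewrite !mxE an.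
- move=> n hn i j; have [_ _ _ /(_ n hn) an] := ha i j.
  by rewrite mxE; split; [apply: sigpow_inR an | apply: sigpowP].
Qed.
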